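(* Let $O$ be the closed disk of radius $R>0$ centered at the origin, let $c_1,\ldots,c_n\in\mathbb{R}^2$ be fixed pupil centers and $\rho_1,\ldots,\rho_n\ge0$ initial pupil radii, and let $\varepsilon>0$. Consider the following algorithm. Repeat: (1) for the current radii, form the disks $D_{ij}$ (center $c_i-c_j$, radius $\rho_i+\rho_j$), their Apollonius diagram, the cells $A_{ij}$ and the sets $V_{ij}$, and set $\alpha_{ij}=\max_{x\in V_{ij}}\delta_{ij}(x)$ (with $\alpha_{ij}=-\infty$ if $V_{ij}=\emptyset$); (2) compute an optimal solution $(\rho^*_1,\ldots,\rho^*_n)$ of the linear program: minimize $\sum_i\rho^*_i$ subject to $\rho^*_i+\rho^*_j\ge(\rho_i+\rho_j)+\alpha_{ij}$ for $i,j=1,\ldots,n$ and $\rho^*_i\ge0$; (3) set $err=\sum_i\rho_i-\sum_i\rho^*_i$ and replace $\rho_i$ by $\rho^*_i$ for all $i$; until $err<\varepsilon$, where the stopping test is not applied after the first iteration. Then this algorithm always terminates.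
   Context: $\delta_{ij}(x)=\|x-(c_i-c_j)\|-(\rho_i+\rho_j)$. For a family of disks $D_k$ with centers $c_k$ and radii $\rho_k$, the Apollonius cell of $D_k$ is $\{x\mid\delta_k(x)\le\delta_l(x)\text{ for all }l\}$ where $\delta_k(x)=\|x-c_k\|-\rho_k$; points lying in at least three cells are Apollonius vertices. $A_{ij}$ is the cell of $D_{ij}$ in the Apollonius diagram of $\{D_{ij}\}_{i,j=1}^n$, and $V_{ij}$ is the set of Apollonius vertices of $A_{ij}$ lying in $O$ together with the points of $\partial A_{ij}\cap\partial O$. *)

From HB Require Import structures.
From mathcomp Require Import all_boot all_order all_algebra.
From mathcomp Require Import boolp classical_sets reals constructive_ereal ereal.
Set Implicit Arguments. Unset Strict Implicit. Unset Printing Implicit Defensive.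
Import Order.TTheory GRing.Theory Num.Theory.
Local Open Scope ring_scope.
Local Open Scope classical_set_scope.

Section Apollonius.
Variable R : realType.

Definition pt := (R * R)%type.
Definition psub (x y : pt) : pt := (x.1 - y.1, x.2 - y.2).
Definition enorm (x : pt) : R := Num.sqrt (x.1 ^+ 2 + x.2 ^+ 2).

Definition boundary (S : set pt) : set pt :=
  [set x | forall e : R, 0 < e ->
     (exists y, S y /\ enorm (psub x y) < e) /\
     (exists z, ~ S z /\ enorm (psub x z) < e)].

Variable n : nat.
Definition idx := ('I_n * 'I_n)%type.

Definition Dcenter (c : 'I_n -> pt) (p : idx) : pt := psub (c p.1) (c p.2).
Definition Dradius (rho : 'I_n -> R) (p : idx) : R := rho p.1 + rho p.2.

Definition delta (c : 'I_n -> pt) (rho : 'I_n -> R) (p : idx) (x : pt) : R :=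
  enorm (psub x (Dcenter c p)) - Dradius rho p.

Definition cell c rho (p : idx) : set pt :=
  [set x | forall q : idx, delta c rho p x <= delta c rho q x].

Definition apollonius_vertex c rho (x : pt) : Prop :=
  exists p q r : idx, [/\ p != q, q != r, p != r &
     [/\ cell c rho p x, cell c rho q x & cell c rho r x]].

Definition diskO (Rad : R) : set pt := [set x | enorm x <= Rad].
Definition circleO (Rad : R) : set pt := [set x | enorm x = Rad].

(* V_ij : Apollonius vertices of A_ij lying in O, together with the points of
   boundary(A_ij) /\ boundary(O) (boundary of O is the circle of radius Rad) *)
Definition Vset Rad c rho (p : idx) : set pt :=
  [set x | apollonius_vertex c rho x /\ cell c rho p x /\ diskO Rad x] `|`
  (boundary (cell c rho p) `&` circleO Rad).

(* alpha_ij = max over V_ij of delta_ij, -oo if V_ij is empty *)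
Definition alpha Rad c rho (p : idx) : \bar R :=
  ereal_sup [set (delta c rho p x)%:E | x in Vset Rad c rho p].

Definition lp_feasible Rad c (rho rs : 'I_n -> R) : Prop :=
  (forall i j : 'I_n,
     ((Dradius rho (i, j))%:E + alpha Rad c rho (i, j) <= (rs i + rs j)%:E)%E)
  /\ (forall i, 0 <= rs i).

Definition lp_optimal Rad c (rho rs : 'I_n -> R) : Prop :=
  lp_feasible Rad c rho rs /\
  forall r', lp_feasible Rad c rho r' -> \sum_i rs i <= \sum_i r' i.

End Apollonius.

From HB Require Import structures.
From mathcomp Require Import all_boot all_order all_algebra.
From mathcomp Require Import boolp classical_sets reals constructive_ereal ereal.
Set Implicit Arguments. Unset Strict Implicit. Unset Printing Implicit Defensive.
Import Order.TTheory GRing.Theory Num.Theory.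
Local Open Scope ring_scope.

(* The LP solutions are nonnegative, so every total radius after the first
   iteration is >= 0; if every later err were >= eps, these totals would
   decrease by eps at each step and eventually become negative.  Neither the
   values alpha_ij nor the hypotheses on Rad and rho0 play any role. *)

Lemma ler_sub_mulrn_of_drops (R : numDomainType) (s : nat -> R) (eps : R) :
  (forall m, eps <= s m - s m.+1) -> forall m, s m <= s 0%N - eps *+ m.
Proof.
move=> drop; elim=> [|m IH]; first by rewrite mulr0n subr0.
rewrite mulrSr opprD addrA (le_trans _ (lerB IH (lexx eps))) //.
by rewrite lerBrDr -lerBrDl drop.
Qed.

Lemma exists_drop_lt (R : archiRealFieldType) (s : nat -> R) (eps : R) :
  0 < eps -> (forall m, 0 <= s m) -> exists m, s m - s m.+1 < eps.
Proof.
move=> eps_gt0 s_ge0; apply: contrapT => /forallNP no_small_drop.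
have drop m : eps <= s m - s m.+1 by rewrite leNgt; apply/negP/no_small_drop.
have [N N_gt] : exists N : nat, s 0%N / eps < N%:R.
  by eexists; apply: archi_boundP; rewrite divr_ge0 ?s_ge0 ?ltW.
have : eps *+ N <= s 0%N.
  by rewrite -subr_ge0 (le_trans (s_ge0 N) (ler_sub_mulrn_of_drops drop N)).
by rewrite -mulr_natr -ler_pdivlMl // mulrC leNgt N_gt.
Qed.

Lemma lp_optimal_sum_ge0 (R : realType) (n : nat) (Rad : R) (c : 'I_n -> pt R)
    (rho rs : 'I_n -> R) :
  lp_optimal Rad c rho rs -> 0 <= \sum_i rs i.
Proof. by move=> [[_ rs_ge0] _]; apply: sumr_ge0. Qed.

Theorem lemma12 (R : realType) (n : nat) (Rad : R) (c : 'I_n -> pt R)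
    (rho0 : 'I_n -> R) (eps : R) :
  0 < Rad -> (forall i, 0 <= rho0 i) -> 0 < eps ->
  forall rho : nat -> 'I_n -> R,
    (forall i, rho 0%N i = rho0 i) ->
    (forall k : nat, lp_optimal Rad c (rho k) (rho k.+1)) ->
    exists t : nat, (2 <= t)%N /\
      \sum_(i < n) rho t.-1 i - \sum_(i < n) rho t i < eps.
Proof.
move=> _ _ eps_gt0 rho _ opt.
have [m small_err] :=
  exists_drop_lt (s := fun m => \sum_i rho m.+1 i) eps_gt0
    (fun m => lp_optimal_sum_ge0 (opt m)).
by exists m.+2.
Qed.
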